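(* Let $\Pi_n$ be the graph on $[n+1]$ with edge multiset $\{(i,i+1),(i,n+1): i=1,\ldots,n\}$ (so $(n,n+1)$ appears twice), and let ${\bf a}=(a_1,\ldots,a_n,-\sum a_i)$ with $a_i\in\mathbb{Z}_{>0}$. The number of types of cells of the canonical subdivision of $\mathcal{F}_{\Pi_n}({\bf a})$ is the Catalan number $C_n=\frac{1}{n+1}\binom{2n}{n}$.
   Context: $\mathcal{F}_H({\bf a})$ is the set of $f\in\mathbb{R}_{\ge0}^{E(H)}$ with outflow minus inflow at each vertex $k\le n$ equal to $a_k$. Noncrossing trees: for ordered lists $L=(x_1,\ldots,x_\ell)$, $R=(y_1,\ldots,y_r)$, $\mathcal{T}_{L,R}$ is the set of trees on $L\sqcup R$ with all edges between $L$ and $R$ and no two edges $(x_p,y_q),(x_t,y_u)$ with $p<t$, $q>u$. Compounded reduction at vertex $i\in\{2,\ldots,n\}$ of a graph $H$ in which $i$ has incoming edges (here $a_i>0$): with $\mathcal{I}_i(H)$, $\mathcal{O}_i(H)$ the multisets of edges $(\cdot,i)$, $(i,\cdot)$ in fixed orderings, $L=(\mathcal{I}_i(H),v_i)$ ($v_i$ a new symbol, last), $R=\mathcal{O}_i(H)$; for $T\in\mathcal{T}_{L,R}$, $H^{(i)}_T$ is $H$ with $\mathcal{I}_i(H)\cup\mathcal{O}_i(H)$ deleted and, for each tree edge, an edge $(r,s)$ added if it joins $(r,i)$ and $(i,s)$, or an edge $(i,s)$ if it joins $v_i$ and $(i,s)$. Each new edge is a formal sum of original edges (summands of the two joined edges,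 resp. of $(i,s)$), and $\mathcal{F}_H({\bf a})$ is identified with its image in the original edge space under $g\mapsto f$, $f(e)=\sum g(e')$ over edges $e'$ having $e$ as summand. Canonical compounded reduction tree: root the original graph; for $i=n,\ldots,2$ in order, every current leaf $H$ in which $i$ has incoming edges gets the children $H^{(i)}_T$, $T\in\mathcal{T}_{L,R}$. The canonical subdivision consists of the polytopes $\mathcal{F}_H({\bf a})$, one per leaf $H$ (the cells); two cells are of the same type if their leaf graphs are identical multigraphs. *)

From mathcomp Require Import all_boot.
Set Implicit Arguments. Unset Strict Implicit. Unset Printing Implicit Defensive.

(* Directed edges (tail, head) of a multigraph on vertices 1..n+1;
   a multigraph is a list of edges, considered up to permutation (perm_eq). *)
Definition edge := (nat * nat)%type.
Definition mgraph := seq edge.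

Definition in_edges (H : mgraph) (i : nat) : mgraph := [seq e <- H | e.2 == i].
Definition out_edges (H : mgraph) (i : nat) : mgraph := [seq e <- H | e.1 == i].

(* ---------- Noncrossing trees T_{L,R} ----------
   L = (x_0,...,x_{l-1}), R = (y_0,...,y_{r-1}) are represented by their index
   sets 'I_l and 'I_r; a candidate tree is a set of edges (p,q) meaning x_p -- y_q
   (all edges go between L and R). *)
Definition bip_adj (l r : nat) (T : {set 'I_l * 'I_r}) : rel ('I_l + 'I_r)%type :=
  fun x y => match x, y with
             | inl p, inr q => (p, q) \in T
             | inr q, inl p => (p, q) \in T
             | _, _ => false
             end.

Definition is_tree (l r : nat) (T : {set 'I_l * 'I_r}) : bool :=
  [forall x, forall y, connect (bip_adj T) x y] && (#|T| == l + r - 1).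

Definition noncrossing (l r : nat) (T : {set 'I_l * 'I_r}) : bool :=
  [forall e1 in T, forall e2 in T,
     ~~ ((val e1.1 < val e2.1) && (val e2.2 < val e1.2))].

Definition NCtrees (l r : nat) : seq {set 'I_l * 'I_r} :=
  enum [set T : {set 'I_l * 'I_r} | is_tree T && noncrossing T].

(* ---------- Compounded reduction at vertex i ----------
   I = ordered list of incoming edges (.,i), O = ordered list of outgoing edges
   (i,.).  L = (I, v_i) has size (size I).+1 (v_i is the last index, size I),
   R = O.  A tree edge (p,q) joining (r,i) and (i,s) gives the edge (r,s);
   joining v_i and (i,s) gives the edge (i,s). *)
Definition new_edge (i : nat) (I O : mgraph) (p q : nat) : edge :=
  (if p < size I then (nth (0, 0) I p).1 else i, (nth (0, 0) O q).2).

Definition reduce (H : mgraph) (i : nat) (I O : mgraph)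
    (T : {set 'I_(size I).+1 * 'I_(size O)}) : mgraph :=
  [seq e <- H | (e.2 != i) && (e.1 != i)]
  ++ [seq new_edge i I O (val pq.1) (val pq.2) | pq <- enum T].

Definition reductions (H : mgraph) (i : nat) (I O : mgraph) : seq mgraph :=
  [seq reduce H i T | T <- NCtrees (size I).+1 (size O)].

(* ---------- Orderings ----------
   The "fixed orderings" of I_i(H), O_i(H) are arbitrary; they may even differ
   from node to node of the reduction tree.  A node is identified by its address
   (the list of child indices from the root), and an ordering choice is a function
   giving, for each address, vertex i and graph H, permutations of the in- and
   out-edge multisets of i in H. *)
Definition ordering := seq nat -> nat -> mgraph -> mgraph * mgraph.

Definition valid_ordering (ord : ordering) : Prop :=
  forall (adr : seq nat) (i : nat) (H : mgraph),
    perm_eq (ord adr i H).1 (in_edges H i) /\ perm_eq (ord adr i H).2 (out_edges H i).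

Definition node := (seq nat * mgraph)%type.

Definition children (ord : ordering) (i : nat) (nd : node) : seq node :=
  let adr := nd.1 in
  let H := nd.2 in
  let IO := ord adr i H in
  let cs := reductions H i IO.1 IO.2 in
  [seq (rcons adr k, nth [::] cs k) | k <- iota 0 (size cs)].

Definition step (ord : ordering) (i : nat) (leaves : seq node) : seq node :=
  flatten [seq (if has (fun e : edge => e.2 == i) nd.2 then children ord i nd
                else [:: nd]) | nd <- leaves].

Definition canonical_leaves (ord : ordering) (n : nat) (G : mgraph) : seq mgraph :=
  [seq nd.2 | nd <- foldl (fun lv i => step ord i lv) [:: ([::], G)]
                             (rev (iota 2 n.-1))].

(* number of types: number of classes of identical multigraphs (perm_eq)
   among the leaf graphs (one cell per leaf) *)
Definition num_types (L : seq mgraph) : nat :=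
  size [seq k <- iota 0 (size L) |
          ~~ has (fun H => perm_eq H (nth [::] L k)) (take k L)].

Definition Pi (n : nat) : mgraph :=
  [seq (i, i.+1) | i <- iota 1 n] ++ [seq (i, n.+1) | i <- iota 1 n].

Definition catalan (n : nat) : nat := 'C(n.*2, n) %/ n.+1.

(* When vertex j is reduced, every leaf has the single incoming edge (j-1, j)
   at j, so L = (x_0, v_j), and a noncrossing tree on L and the r outgoing
   edges y_0, ..., y_(r-1) of j is a fan: x_0 is joined to y_0..y_k and v_j to
   y_k..y_(r-1), for some k < r.  The child for this fan gives j-1 the
   out-degree k+2 and leaves j with out-degree r-k.  Hence a leaf with a
   vertices still to reduce, whose next vertex has out-degree m, has
   [ballot a m] final descendants, where
   ballot (a+1) m = sum_(x=1..m) ballot a (x+1) and ballot (n-1) 2 = C_n.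
   The out-degree r-k left at a reduced vertex never changes again, so distinct
   final leaves have distinct out-degree sequences and are distinct
   multigraphs: the number of types is the number of leaves. *)

From mathcomp Require Import all_boot zify.
Set Implicit Arguments. Unset Strict Implicit. Unset Printing Implicit Defensive.
Set Bullet Behavior "Strict Subproofs".

Lemma card_set_count (X : finType) (A : {set X}) (P : pred X) :
  #|[set x in A | P x]| = count P (enum A).
Proof.
rewrite (_ : [set x in A | P x] = A :&: [set x | P x]); last by apply/setP => x; rewrite !inE.
rewrite cardE (perm_size (enum_setI _ _)) size_filter.
by apply: eq_count => x; rewrite inE.
Qed.

Lemma card_ord_ltn r k : k <= r -> #|[set q : 'I_r | q < k]| = k.
Proof.
move=> kr; have -> : [set q : 'I_r | q < k] = widen_ord kr @: [set: 'I_k].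
  apply/setP => q; rewrite inE; apply/idP/imsetP => [qk | [x _ -> /=]]; last exact: ltn_ord.
  by exists (Ordinal qk); rewrite ?inE //; apply: val_inj.
by rewrite card_imset ?cardsT ?card_ord // => x y /(congr1 val) /= /val_inj.
Qed.

Lemma count_predI_split (X : Type) (a b : pred X) s :
  count a s = count (predI a b) s + count (predI a (predC b)) s.
Proof. by elim: s => //= x s ->; case: (a x) (b x) => [] [] /=; rewrite ?addSn ?addnS. Qed.

Lemma uniq_flatten_behead (S T : eqType) (f : S -> seq T) (g : S -> seq (seq T)) (s : seq S) :
  uniq (map f s) -> {in s, forall x, uniq (g x)} ->
  {in s, forall x, {in g x, forall y, behead y = f x}} -> uniq (flatten (map g s)).
Proof.
elim: s => //= x s IHs /andP [fx_notin uniq_fs] uniq_g behead_g.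
have uniq_rest : uniq (flatten (map g s)).
  by apply: IHs => // y ys; [apply: uniq_g | apply: behead_g]; rewrite inE ys orbT.
rewrite cat_uniq uniq_g ?mem_head // uniq_rest andbT.
apply/hasPn => z /flattenP [_ /mapP [y ys ->] zy]; apply/negP => zx.
have := behead_g x (mem_head x s) z zx; rewrite (behead_g y) ?inE ?ys ?orbT // => fyx.
by move: fx_notin; rewrite -fyx map_f.
Qed.

Lemma num_types_uniq (S : eqType) (f : mgraph -> S) (L : seq mgraph) :
  (forall H H', perm_eq H H' -> f H = f H') -> uniq (map f L) -> num_types L = size L.
Proof.
move=> f_perm uniq_fL; rewrite /num_types (all_filterP _) ?size_iota //.
apply/allP => k; rewrite mem_iota => /andP [_ k_lt]; apply/hasPn => _ /(nthP [::]) [i i_lt <-].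
rewrite size_take k_lt in i_lt; rewrite nth_take //; apply/negP => /f_perm.
have i_lt_size : i < size L := ltn_trans i_lt k_lt.
rewrite -!(nth_map [::] (f [::]) f) // => /eqP; rewrite nth_uniq ?size_map // => /eqP i_k.
by rewrite i_k ltnn in i_lt.
Qed.

Fixpoint ballot (a m : nat) : nat :=
  if a is a'.+1 then \sum_(x <- iota 1 m) ballot a' x.+1 else 1.

Lemma ballotS a m : ballot a.+1 m.+1 = ballot a.+1 m + ballot a m.+2.
Proof.
rewrite -[LHS]/(\sum_(x <- iota 1 m.+1) ballot a x.+1).
by rewrite -(addn1 m) iotaD big_cat add1n big_seq1 addn1.
Qed.

Lemma ballot_closed a m : ballot a m * (a + m) = m * 'C((a + a + m).-1, a).
Proof.
elim: a m => [|a IHa] m; first by rewrite /= bin0 mul1n muln1.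
elim: m => [|m IHm]; first by rewrite /= big_nil.
set p := (a + m).+1.
have IHm' : ballot a.+1 m * p = m * 'C((a + a + m).+1, a.+1).
  by rewrite /p -addSn IHm !addSn addnS.
have IHa' : ballot a m.+2 * p.+1 = m.+2 * 'C((a + a + m).+1, a).
  by rewrite /p -!addnS IHa !addnS.
have pascal : a.+1 * 'C((a + a + m).+1, a.+1) = p * 'C((a + a + m).+1, a).
  by rewrite mul_bin_left; congr (_ * _); lia.
have split_bin : ballot a.+1 m + 'C((a + a + m).+1, a) = 'C((a + a + m).+1, a.+1).
  apply/eqP; rewrite -(eqn_pmul2r (ltn0Sn (a + m))) -/p; apply/eqP.
  rewrite mulnDl IHm' [_ * p]mulnC -pascal; lia.
rewrite ballotS (_ : a.+1 + m.+1 = p.+1); last by lia.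
rewrite (_ : (a.+1 + a.+1 + m.+1).-1 = (a + a + m).+2); last by lia.
rewrite binS -split_bin mulnDl IHa' mulnS IHm'; lia.
Qed.

Lemma catalan_ballot n : catalan n.+1 = ballot n 2.
Proof.
have := ballot_closed n 2; rewrite addn2 (_ : (n + n + 2).-1 = (n + n).+1); last by lia.
have sym : 'C((n + n).+1, n.+1) = 'C((n + n).+1, n).
  by rewrite -[RHS]bin_sub; [congr 'C(_, _) |]; lia.
rewrite /catalan doubleS -addnn binS sym mul2n -addnn => <-.
by rewrite mulnK.
Qed.

Section TwoRowNoncrossingTrees.
Variable r : nat.
Implicit Type T : {set 'I_2 * 'I_r}.

(* For a reduction at a vertex with one incoming edge, row 0 of [T] is that
   edge and row 1 is the new symbol v_j. *)
Definition deg0 T := #|[set pq in T | val pq.1 == 0]|.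
Definition deg1 T := #|[set pq in T | val pq.1 == 1]|.

Definition fan k : {set 'I_2 * 'I_r} :=
  [set pq | if val pq.1 == 0 then val pq.2 <= k else k <= val pq.2].

Lemma deg0_deg1 T : deg0 T + deg1 T = #|T|.
Proof.
rewrite /deg0 /deg1 -(cardID [set pq | val pq.1 == 0] T).
by congr (_ + _); apply: eq_card => -[[[|[|p]] Hp] q]; rewrite !inE /= ?andbT ?andbF.
Qed.

Lemma deg0_fan k : k < r -> deg0 (fan k) = k.+1.
Proof.
move=> kr; rewrite /deg0.
have -> : [set pq in fan k | val pq.1 == 0] = setX [set ord0] [set q : 'I_r | q < k.+1].
  by apply/setP => -[[[|[|p]] Hp] q]; rewrite !inE /= ?andbT ?andbF.
by rewrite cardsX cards1 mul1n card_ord_ltn.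
Qed.

Lemma deg1_fan k : k < r -> deg1 (fan k) = r - k.
Proof.
move=> kr; rewrite /deg1.
have -> : [set pq in fan k | val pq.1 == 1] = setX [set ord_max] (~: [set q : 'I_r | q < k]).
  by apply/setP => -[[[|[|p]] Hp] q]; rewrite !inE /= -?leqNgt ?andbT ?andbF.
by rewrite cardsX cards1 mul1n cardsCs setCK card_ord card_ord_ltn // ltnW.
Qed.

Lemma card_fan k : k < r -> #|fan k| = r.+1.
Proof. by move=> kr; rewrite -deg0_deg1 deg0_fan // deg1_fan // addSn subnKC // ltnW. Qed.

Lemma fan_NCtree k : k < r -> fan k \in NCtrees 2 r.
Proof.
move=> kr; rewrite mem_enum inE /is_tree card_fan // add2n subn1 eqxx andbT; apply/andP; split.
  have sym : symmetric (bip_adj (fan k)) by move=> [x|x] [y|y].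
  have to_x0 x : connect (bip_adj (fan k)) x (inl ord0).
    have yk_x0 : connect (bip_adj (fan k)) (inr (Ordinal kr)) (inl ord0).
      by apply: connect1; rewrite /= inE /= leqnn.
    case: x => [[[|[|p]] Hp] | q] //.
      by rewrite (_ : Ordinal Hp = ord0) //; apply: val_inj.
      by apply: (connect_trans _ yk_x0); apply: connect1; rewrite /= inE /=.
    have [qk | kq] := leqP q k; first by apply: connect1; rewrite /= inE /= qk.
    apply: (@connect_trans _ _ (inl ord_max)); last first.
      by apply: (connect_trans _ yk_x0); apply: connect1; rewrite /= inE /=.
    by apply: connect1; rewrite /= inE /= ltnW.
  apply/forallP => x; apply/forallP => y.
  by apply: connect_trans (to_x0 x) _; rewrite (sym_connect_sym sym).
apply/forall_inP => -[[[|[|p1]] H1] q1]; rewrite inE /= => h1;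
  apply/forall_inP => -[[[|[|p2]] H2] q2]; rewrite inE /= => h2 //=.
by rewrite -leqNgt (leq_trans h1 h2).
Qed.

Lemma NCtree_fan T : T \in NCtrees 2 r -> exists2 k, k < r & T = fan k.
Proof.
rewrite mem_enum inE /is_tree add2n subn1 /= => /andP [/andP [_ /eqP card_T] nc].
pose A := [set q : 'I_r | (ord0, q) \in T].
have A_gt0 : 0 < #|A|.
  rewrite lt0n; apply/negP => /eqP /cards0_eq A0.
  suff : #|T| <= #|setX [set ord_max : 'I_2] [set: 'I_r]|.
    by rewrite cardsX cards1 cardsT card_ord card_T mul1n ltnn.
  apply: subset_leq_card; apply/subsetP => -[[[|[|p]] Hp] q] pqT; rewrite !inE //=.
  have : q \in A by rewrite inE (_ : ord0 = Ordinal Hp) //; apply: val_inj.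
  by rewrite A0 inE.
have [q0 q0A q0max] := eq_bigmax_cond (fun q : 'I_r => val q) A_gt0.
exists (val q0); first exact: ltn_ord.
apply/eqP; rewrite eqEcard card_fan ?ltn_ord // card_T leqnn andbT.
apply/subsetP => -[[[|[|p]] Hp] q] pqT; rewrite inE //=.
  have qA : q \in A by rewrite inE (_ : ord0 = Ordinal Hp) //; apply: val_inj.
  by rewrite -q0max; exact: leq_bigmax_cond.
move: q0A; rewrite inE => q0T.
by move: (forall_inP nc _ q0T) => /forall_inP /(_ _ pqT) /=; rewrite -leqNgt.
Qed.

Lemma perm_deg0_NCtrees : perm_eq [seq deg0 T | T <- NCtrees 2 r] (iota 1 r).
Proof.
apply: uniq_perm; last 1 first.
- move=> d; rewrite mem_iota add1n ltnS.
  apply/mapP/idP => [[T /NCtree_fan [k kr ->] ->] | /andP [d_gt0 dr]]; first by rewrite deg0_fan.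
  by exists (fan d.-1); rewrite ?fan_NCtree ?deg0_fan ?prednK // -ltnS prednK.
- rewrite map_inj_in_uniq ?enum_uniq // => _ _ /NCtree_fan [k1 k1r ->] /NCtree_fan [k2 k2r ->].
  by rewrite !deg0_fan // => -[->].
- exact: iota_uniq.
Qed.

Lemma uniq_deg1_NCtrees : uniq [seq deg1 T | T <- NCtrees 2 r].
Proof.
have deg1E T : T \in NCtrees 2 r -> deg1 T = r.+1 - deg0 T.
  by case/NCtree_fan => k kr ->; rewrite -(card_fan kr) -deg0_deg1 addKn.
rewrite ((eq_in_map _ _ _).1 deg1E) (map_comp (subn r.+1) deg0) map_inj_in_uniq.
  by rewrite (perm_uniq perm_deg0_NCtrees) iota_uniq.
move=> d1 d2; rewrite !(perm_mem perm_deg0_NCtrees) !mem_iota add1n !ltnS.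
move=> /andP [_ d1r] /andP [_ d2r]; lia.
Qed.

End TwoRowNoncrossingTrees.

Definition out_deg (i : nat) (H : mgraph) : nat := count (fun e : edge => e.1 == i) H.

(* The shape of every leaf of the canonical tree when vertex [j] is next. *)
Definition pi_shaped (j : nat) (H : mgraph) : Prop :=
  [/\ all (fun e : edge => e.1 < e.2) H,
      forall i, 1 < i <= j -> in_edges H i = [:: (i.-1, i)] &
      forall i, 0 < i < j -> out_deg i H = 2].

Definition upward_from (j : nat) (O : mgraph) : bool :=
  all (fun e : edge => (e.1 == j) && (j < e.2)) O.

Section ReductionAtChainVertex.
Variables (j : nat) (H O : mgraph).
Hypotheses (j_gt1 : 1 < j) (shH : pi_shaped j H).
Variable T : {set 'I_2 * 'I_(size O)}.

Let kept := [seq e <- H | (e.2 != j) && (e.1 != j)].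
Let added := [seq new_edge j [:: (j.-1, j)] O (val pq.1) (val pq.2) | pq <- enum T].
Let K := @reduce H j [:: (j.-1, j)] O T.

Lemma added_edge e : upward_from j O ->
  e \in added -> ((e.1 == j.-1) || (e.1 == j)) && (j < e.2).
Proof.
move=> O_up; case/mapP => -[[[|[|p]] Hp] q] _ -> //=; rewrite eqxx ?orbT /=;
  by have /(allP O_up) /andP [] : nth (0, 0) O q \in O by rewrite mem_nth.
Qed.

Lemma out_deg_kept i : i != j -> out_deg i H = out_deg i kept + (i == j.-1).
Proof.
case: shH => _ in_edges_H _ ij.
have <- : count (fun e : edge => e.1 == i) (in_edges H j) = (i == j.-1).
  by rewrite in_edges_H ?j_gt1 //= addn0 eq_sym.
rewrite /out_deg (count_predI_split _ (fun e : edge => (e.2 != j) && (e.1 != j))) -count_filter.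
congr (_ + _); rewrite count_filter; apply: eq_count => -[x y] /=.
by case: (eqVneq x i) => //= ->; rewrite (negbTE ij) andbT negbK.
Qed.

Lemma out_deg_kept_self : out_deg j kept = 0.
Proof.
rewrite /out_deg count_filter (eq_count (a2 := pred0)) ?count_pred0 // => -[x y] /=.
by rewrite andbCA andbN andbF.
Qed.

Lemma out_deg_added i :
  out_deg i added = (if i == j.-1 then deg0 T else 0) + (if i == j then deg1 T else 0).
Proof.
have jE : (j == j.-1) = false by lia.
rewrite /out_deg count_map /deg0 /deg1 !card_set_count.
case: (eqVneq i j.-1) => [-> | i_pred]; last case: (eqVneq i j) => [-> | i_j].
- by rewrite eq_sym jE addn0; apply: eq_count => -[[[|[|p]] Hp] q] //=; rewrite ?eqxx ?jE.
- by rewrite add0n; apply: eq_count => -[[[|[|p]] Hp] q] //=; rewrite ?eqxx // [_ == j]eq_sym jE.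
- rewrite (eq_count (a2 := pred0)) ?count_pred0 // => -[[[|[|p]] Hp] q] //=;
  by rewrite eq_sym ?(negbTE i_pred) ?(negbTE i_j).
Qed.

Lemma out_deg_cat i : out_deg i K = out_deg i kept + out_deg i added.
Proof. exact: count_cat. Qed.

Lemma out_deg_reduce_pred : out_deg j.-1 K = (deg0 T).+1.
Proof.
case: shH => _ _ out_deg_H.
have j_pred : j.-1 != j by lia.
have kept1 : out_deg j.-1 kept = 1.
  by have := out_deg_kept j_pred; rewrite out_deg_H ?eqxx; lia.
by rewrite out_deg_cat out_deg_added kept1 eqxx (negbTE j_pred) addn0.
Qed.

Lemma out_deg_reduce_self : out_deg j K = deg1 T.
Proof.
have j_pred : j != j.-1 by lia.
by rewrite out_deg_cat out_deg_kept_self out_deg_added eqxx (negbTE j_pred).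
Qed.

Lemma out_deg_reduce_other i : i != j.-1 -> i != j -> out_deg i K = out_deg i H.
Proof.
move=> i_pred i_j.
by rewrite out_deg_cat out_deg_added (out_deg_kept i_j) (negbTE i_pred) (negbTE i_j) !addn0.
Qed.

Lemma reduce_pi_shaped : upward_from j O -> pi_shaped j.-1 K.
Proof.
move=> O_up; case: shH => incr in_edges_H out_deg_H; split.
- rewrite all_cat all_filter; apply/andP; split.
    by apply/allP => e eH; apply/implyP => _; exact: (allP incr).
  apply/allP => e /(added_edge O_up) /andP [/orP [] /eqP -> lt_j] //.
  exact: leq_ltn_trans (leq_pred j) lt_j.
- move=> i /andP [i_gt1 i_le]; rewrite /in_edges filter_cat.
  have -> : [seq e <- added | e.2 == i] = [::].
    apply/eqP; rewrite -[_ == _]negbK -has_filter.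
    by apply/hasPn => -[x y] /(added_edge O_up) /andP [_ /= ?]; apply/eqP; lia.
  have in_edges_i : in_edges H i = [:: (i.-1, i)] by apply: in_edges_H; lia.
  rewrite cats0 -filter_predI -in_edges_i.
  apply: eq_in_filter => -[x y] /(allP incr) /= xy.
  by case: (eqVneq y i) xy => //= -> xy; apply/andP; split; apply/eqP; lia.
- move=> i i_range; rewrite out_deg_reduce_other ?out_deg_H //; apply/eqP; lia.
Qed.

End ReductionAtChainVertex.

Lemma out_deg_Pi n i : 0 < i <= n -> out_deg i (Pi n) = 2.
Proof.
move=> i_range; rewrite /out_deg /Pi count_cat !count_map.
have count_i (f : nat -> nat) :
    count (preim (fun x => (x, f x)) (fun e : edge => e.1 == i)) (iota 1 n) = 1.
  rewrite (eq_count (a2 := pred1 i)) // count_uniq_mem ?iota_uniq //.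
  by rewrite mem_iota add1n ltnS i_range.
by rewrite !count_i.
Qed.

Lemma Pi_pi_shaped n : pi_shaped n (Pi n).
Proof.
split.
- rewrite /Pi all_cat !all_map.
  by apply/andP; split; apply/allP => x; rewrite mem_iota //= => ?; lia.
- move=> i /andP [i_gt1 i_le]; rewrite /in_edges /Pi filter_cat !filter_map.
  have -> : [seq x <- iota 1 n | preim (fun x => (x, n.+1)) (fun e : edge => e.2 == i) x] = [::].
    by apply/eqP; rewrite -[_ == _]negbK -has_filter; apply/hasPn => x _ /=; apply/eqP; lia.
  rewrite cats0 (eq_filter (a2 := pred1 i.-1)) => [|x /=]; last by apply/eqP/eqP; lia.
  rewrite filter_pred1_uniq ?iota_uniq ?mem_iota //= ?prednK //; lia.
- by move=> i /andP [i_gt0 i_lt]; apply: out_deg_Pi; rewrite i_gt0 ltnW.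
Qed.

Section CanonicalReductionTree.
Variables (ord : ordering) (n : nat).
Hypothesis ord_valid : valid_ordering ord.

Lemma children_reduce j nd : 1 < j -> pi_shaped j nd.2 ->
  exists O : mgraph, [/\ upward_from j O,
     size O = out_deg j nd.2 &
     [seq c.2 | c <- children ord j nd] =
       [seq @reduce nd.2 j [:: (j.-1, j)] O T | T <- NCtrees 2 (size O)]].
Proof.
move=> j_gt1 [incr in_edges_H _]; have [perm_in perm_out] := ord_valid nd.1 j nd.2.
have in_j : (ord nd.1 j nd.2).1 = [:: (j.-1, j)].
  by apply: perm_small_eq => //; rewrite -(in_edges_H j) // j_gt1 /=.
exists (ord nd.1 j nd.2).2; split.
- apply/allP => e; rewrite (perm_mem perm_out) mem_filter => /andP [/eqP e1 eH].
  by rewrite e1 eqxx -{1}e1 (allP incr).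
- by rewrite (perm_size perm_out) size_filter.
- rewrite /children -map_comp; set cs := reductions _ _ _ _.
  by transitivity cs; [exact: mkseq_nth | rewrite /cs in_j].
Qed.

Lemma step_flatten j L : 1 < j -> {in L, forall nd, pi_shaped j nd.2} ->
  step ord j L = flatten [seq children ord j nd | nd <- L].
Proof.
move=> j_gt1 shL; congr flatten; apply/eq_in_map => nd /shL [_ in_edges_H _].
by rewrite has_filter -/(in_edges nd.2 j) in_edges_H // j_gt1 leqnn.
Qed.

Lemma children_pi_shaped j nd c : pi_shaped j.+2 nd.2 -> c \in children ord j.+2 nd ->
  pi_shaped j.+1 c.2.
Proof.
move=> shH c_in; have [O [O_up _ childrenE]] := children_reduce (isT : 1 < j.+2) shH.
have : c.2 \in [seq c.2 | c <- children ord j.+2 nd] by apply: map_f.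
by rewrite childrenE => /mapP [T _ ->]; exact: reduce_pi_shaped.
Qed.

Lemma sum_ballot_children j nd : pi_shaped j.+2 nd.2 ->
  \sum_(c <- children ord j.+2 nd) ballot j (out_deg j.+1 c.2) = ballot j.+1 (out_deg j.+2 nd.2).
Proof.
move=> shH; have [O [_ sizeO childrenE]] := children_reduce (isT : 1 < j.+2) shH.
rewrite -(big_map snd xpredT (fun H => ballot j (out_deg j.+1 H))) childrenE big_map.
rewrite (eq_bigr (fun T => ballot j (deg0 T).+1)) => [|T _]; last first.
  by rewrite (out_deg_reduce_pred _ shH).
rewrite -(big_map (@deg0 _) xpredT (fun d => ballot j d.+1)).
by rewrite (perm_big _ (perm_deg0_NCtrees _)) -sizeO.
Qed.

Definition out_degs (k : nat) (H : mgraph) : seq nat := [seq out_deg i H | i <- iota k (n.+1 - k)].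

Lemma out_degs_child j nd c : j.+2 <= n -> pi_shaped j.+2 nd.2 -> c \in children ord j.+2 nd ->
  out_degs j.+2 c.2 = out_deg j.+2 c.2 :: out_degs j.+3 nd.2.
Proof.
move=> j_le shH c_in; have [O [_ _ childrenE]] := children_reduce (isT : 1 < j.+2) shH.
have : c.2 \in [seq c.2 | c <- children ord j.+2 nd] by apply: map_f.
rewrite childrenE => /mapP [T _ ->]; rewrite /out_degs subSn //= subSS; congr (_ :: _).
apply/eq_in_map => i; rewrite mem_iota => /andP [j_lt_i _].
by apply: (out_deg_reduce_other _ shH); apply/eqP; lia.
Qed.

Lemma uniq_out_deg_children j nd : pi_shaped j.+2 nd.2 ->
  uniq [seq out_deg j.+2 c.2 | c <- children ord j.+2 nd].
Proof.
move=> shH; have [O [_ _ childrenE]] := children_reduce (isT : 1 < j.+2) shH.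
rewrite (map_comp (out_deg j.+2) snd) childrenE -map_comp.
rewrite (eq_map (g := @deg1 _)) ?uniq_deg1_NCtrees // => T /=.
exact: out_deg_reduce_self.
Qed.

(* [L] lists the leaves just before vertex [j.+1] is reduced. *)
Definition leaf_inv (j : nat) (L : seq node) : Prop :=
  [/\ {in L, forall nd, pi_shaped j.+1 nd.2},
      \sum_(nd <- L) ballot j (out_deg j.+1 nd.2) = catalan n &
      uniq [seq out_degs j.+2 nd.2 | nd <- L]].

Lemma leaf_inv_step j L : j.+2 <= n -> leaf_inv j.+1 L -> leaf_inv j (step ord j.+2 L).
Proof.
move=> j_le [shL sumL uniqL]; rewrite step_flatten //; split.
- by move=> c /flattenP [_ /mapP [nd ndL ->]]; apply: children_pi_shaped (shL _ ndL).
- rewrite big_flatten big_map -sumL; apply: eq_big_seq => nd ndL.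
  exact: sum_ballot_children (shL _ ndL).
- rewrite map_flatten -map_comp.
  apply: (uniq_flatten_behead (f := fun nd : node => out_degs j.+3 nd.2)) => // nd ndL.
    rewrite /= (eq_in_map _ (fun c : node => out_deg j.+2 c.2 :: out_degs j.+3 nd.2) _).1.
      rewrite (map_comp (cons^~ _) (fun c : node => out_deg j.+2 c.2)) map_inj_uniq.
        exact: uniq_out_deg_children (shL _ ndL).
      by move=> x y [].
    by move=> c c_in; rewrite (out_degs_child j_le (shL _ ndL) c_in).
  by move=> _ /mapP [c c_in ->]; rewrite (out_degs_child j_le (shL _ ndL) c_in).
Qed.

Lemma leaf_inv_foldl m L : m < n -> leaf_inv m L ->
  leaf_inv 0 (foldl (fun lv i => step ord i lv) L (rev (iota 2 m))).
Proof.
elim: m L => [|m IHm] L m_lt inv_L //.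
rewrite -(addn1 m) iotaD rev_cat /= add2n; apply: IHm; first exact: ltnW.
exact: leaf_inv_step.
Qed.

End CanonicalReductionTree.

Lemma num_types_leaf_inv n L : leaf_inv n 0 L -> num_types [seq nd.2 | nd <- L] = catalan n.
Proof.
case=> _ sumL uniqL; rewrite (@num_types_uniq _ (out_degs n 2)) ?size_map.
- by rewrite -sumL (eq_bigr (fun _ => 1)) // sum1_size.
- by move=> H H' /permP HH'; apply/eq_map => i; exact: HH'.
- by rewrite -map_comp.
Qed.

Theorem corollary6p3 (n : nat) (a : nat -> nat) (ord : ordering) :
  0 < n ->
  (forall k, 1 <= k <= n -> 0 < a k) ->
  valid_ordering ord ->
  num_types (canonical_leaves ord n (Pi n)) = catalan n.
Proof.
(* The flow vector does not enter the reduction tree, only its cells. *)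
case: n => // n _ _ ord_valid; apply: num_types_leaf_inv.
apply: (leaf_inv_foldl ord_valid (ltnSn n)); split.
- by move=> nd; rewrite inE => /eqP ->; exact: Pi_pi_shaped.
- by rewrite big_seq1 out_deg_Pi ?leqnn // catalan_ballot.
- by [].
Qed.
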